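(* For integers $m\geq 1$ and $n\geq 2$, let $T_n$ be any tree with $n$ vertices and let $\overline{K_m}$ be the edgeless graph on $m$ vertices. Then $m+1\leq \chi_L(T_n\odot \overline{K_m})\leq \chi_L(T_n)+m$.
   Context: All graphs are finite and simple. A $k$-coloring of a connected graph $G$ is a map $c:V(G)\to\{1,\dots,k\}$ with $c(u)\neq c(v)$ for adjacent $u,v$; it induces the partition $\Pi=\{C_1,\dots,C_k\}$ into color classes $C_i=c^{-1}(i)$. The color code of $v$ is $c_\Pi(v)=(d(v,C_1),\dots,d(v,C_k))$ with $d(v,C_i)=\min\{d(v,x): x\in C_i\}$ (graph distance). $c$ is a locating coloring if distinct vertices have distinct color codes; the locating-chromatic number $\chi_L(G)$ is the least $k$ for which a locating $k$-coloring exists. The corona product $G\odot H$ of a graph $G$ with vertex set $\{a_1,\dots,a_n\}$ and a graph $H$ is obtained from one copy of $G$ and $n$ disjoint copies of $H$ by joining $a_i$ to every vertex of the $i$-th copy of $H$. *)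

From mathcomp Require Import all_boot.
Set Implicit Arguments. Unset Strict Implicit. Unset Printing Implicit Defensive.

Definition simple_graph (T : finType) (e : rel T) : Prop :=
  symmetric e /\ irreflexive e.

Definition connected_graph (T : finType) (e : rel T) : Prop :=
  forall x y : T, connect e x y.

Definition acyclic_graph (T : finType) (e : rel T) : Prop :=
  forall c : seq T, uniq c -> 3 <= size c -> ~~ cycle e c.

Definition is_tree (T : finType) (e : rel T) : Prop :=
  [/\ simple_graph e, connected_graph e & acyclic_graph e].

Fixpoint walk (T : finType) (e : rel T) (k : nat) (x y : T) : bool :=
  match k with
  | 0 => x == y
  | k'.+1 => [exists z, e x z && walk e k' z y]
  end.

(* Graph distance: least k with a walk of length k from x to y
   (every such k is < #|T| when x, y are connected; the value #|T|
   is returned if y is unreachable, which never happens in connected graphs). *)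
Definition dist (T : finType) (e : rel T) (x y : T) : nat :=
  find (fun k => walk e k x y) (iota 0 #|T|).

Definition dist_class (T : finType) (e : rel T) (k : nat) (c : T -> 'I_k)
    (v : T) (i : 'I_k) : nat :=
  \big[minn/#|T|]_(x | c x == i) dist e v x.

Definition color_code (T : finType) (e : rel T) (k : nat) (c : T -> 'I_k)
    (v : T) : {ffun 'I_k -> nat} :=
  [ffun i => dist_class e c v i].

Definition locating_coloring (T : finType) (e : rel T) (k : nat)
    (c : T -> 'I_k) : bool :=
  [&& [forall x, forall y, e x y ==> (c x != c y)],
      [forall i : 'I_k, exists x, c x == i]
    & injectiveb (color_code e c)].

Definition has_locating_coloring (T : finType) (e : rel T) (k : nat) : bool :=
  [exists c : {ffun T -> 'I_k}, locating_coloring e c].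

(* chi_L: least k admitting a locating k-coloring (searched among
   0..#|T|; a locating #|T|-coloring always exists for connected graphs). *)
Definition chiL (T : finType) (e : rel T) : nat :=
  find (has_locating_coloring e) (iota 0 #|T|.+1).

(* Corona product G ⊙ H: vertices inl a (a in G) and inr (a, x)
   (vertex x of the copy of H attached to a). *)
Definition corona (T U : finType) (eG : rel T) (eH : rel U) : rel (T + (T * U)) :=
  fun p q =>
    match p, q with
    | inl a, inl b => eG a b
    | inl a, inr (b, _) => a == b
    | inr (a, _), inl b => a == b
    | inr (a, x), inr (b, y) => (a == b) && eH x y
    end.

Definition edgeless (m : nat) : rel 'I_m := fun _ _ => false.
Arguments edgeless m : clear implicits.

From mathcomp Require Import all_boot.
Set Implicit Arguments. Unset Strict Implicit. Unset Printing Implicit Defensive.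

(* Lower bound: a vertex and its m pendant leaves get m + 1 distinct colors.  The
   vertex is adjacent to each of its leaves, and two of its leaves are at the same
   distance from every third vertex, so equal colors would give equal color codes.
   Upper bound: extend a locating k-coloring of the tree by giving the j-th leaf of
   every vertex the new color k + j.  From a tree vertex the distances to the old
   color classes are those in the tree, from a leaf they are one more, so vertices
   of equal color are still separated by the old classes. *)

Lemma find_iota_leq (P : pred nat) n i : i < n -> P i -> find P (iota 0 n) <= i.
Proof.
move=> lt_in Pi; rewrite leqNgt; apply/negP => /(before_find 0).
by rewrite nth_iota // add0n Pi.
Qed.

Lemma find_iota_ltP (P : pred nat) n :
  find P (iota 0 n) < n -> P (find P (iota 0 n)).
Proof.
move=> lt_n; have hasP : has P (iota 0 n) by rewrite has_find size_iota.
by have := nth_find 0 hasP; rewrite nth_iota ?add0n.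
Qed.

Lemma find_iota_minn (P : pred nat) n1 n2 : n1 <= n2 ->
  find P (iota 0 n1) = minn (find P (iota 0 n2)) n1.
Proof.
move=> le12; rewrite -(subnKC le12) iotaD find_cat.
case: ifP => [hasP|/negbT hasNP].
  by move: (hasP); rewrite has_find size_iota => /ltnW/minn_idPl.
by rewrite (hasNfind hasNP) size_iota add0n (minn_idPr (leq_addr _ _)).
Qed.

Section BigMinn.
Variables (I : finType) (P : pred I) (F : I -> nat) (x0 : nat).

Lemma geq_bigminn_cond i : P i -> \big[minn/x0]_(j | P j) F j <= F i.
Proof.
move=> Pi; rewrite -big_filter.
have : i \in [seq j <- index_enum I | P j] by rewrite mem_filter Pi mem_index_enum.
elim: [seq j <- index_enum I | P j] => [|j s IHs] //.
rewrite inE big_cons => /orP[/eqP <-|/IHs]; first exact: geq_minl.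
exact: leq_trans (geq_minr _ _).
Qed.

Lemma leq_bigminn n :
  n <= x0 -> (forall i, P i -> n <= F i) -> n <= \big[minn/x0]_(i | P i) F i.
Proof.
move=> le_n_x0 leFn; apply: (big_ind (leq n)) => // p q lenp lenq.
by rewrite leq_min lenp lenq.
Qed.

Lemma bigminn_attained :
  \big[minn/x0]_(i | P i) F i = x0 \/
  exists2 i, P i & F i = \big[minn/x0]_(j | P j) F j.
Proof.
apply: (big_ind (fun y => y = x0 \/ exists2 i, P i & F i = y)); first by left.
  by move=> p q hp hq; case: leqP.
by move=> i Pi; right; exists i.
Qed.

End BigMinn.

Section Distance.
Variables (T : finType) (e : rel T).

Lemma dist_leq_walk x y k : k < #|T| -> walk e k x y -> dist e x y <= k.
Proof. exact: (@find_iota_leq (fun k => walk e k x y)). Qed.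

Lemma walk_dist x y : dist e x y < #|T| -> walk e (dist e x y) x y.
Proof. exact: (@find_iota_ltP (fun k => walk e k x y)). Qed.

Lemma dist_eq0 x y : (dist e x y == 0) = (x == y).
Proof.
have T_gt0 : 0 < #|T| by apply/card_gt0P; exists x.
apply/eqP/eqP => [dxy0|<-]; last first.
  by apply/eqP; rewrite -leqn0 dist_leq_walk //=.
by have := @walk_dist x y; rewrite dxy0 => /(_ T_gt0) /eqP.
Qed.

Lemma dist_xx x : dist e x x = 0.
Proof. by apply/eqP; rewrite dist_eq0. Qed.

Lemma walk_path x p : path e x p -> walk e (size p) x (last x p).
Proof.
elim: p x => [|y p IHp] x //= /andP[exy pth].
by apply/existsP; exists y; rewrite exy IHp.
Qed.

Lemma connect_dist_lt x y : connect e x y -> dist e x y < #|T|.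
Proof.
case/connectP=> p pth ->; case: (shortenP pth) => q qpth uniq_xq _.
apply: leq_ltn_trans (dist_leq_walk _ (walk_path qpth)) _;
  by have := max_card (mem (x :: q)); rewrite (card_uniqP uniq_xq).
Qed.

Lemma dist_class_eq0 k (c : T -> 'I_k) v i :
  (dist_class e c v i == 0) = (c v == i).
Proof.
apply/idP/idP => [|/eqP cvi]; last first.
  by rewrite -leqn0 -(dist_xx v); apply: geq_bigminn_cond; rewrite cvi.
rewrite /dist_class.
have [->|[z /eqP czi dz]] := bigminn_attained (fun z => c z == i) (dist e v) #|T|.
  by move/eqP/card0_eq/(_ v).
by rewrite -dz dist_eq0 => /eqP ->; apply/eqP.
Qed.

Lemma color_code_inj_color k (c : T -> 'I_k) x y :
  color_code e c x = color_code e c y -> c x = c y.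
Proof.
move=> /ffunP /(_ (c x)); rewrite !ffunE => dxy.
by apply/esym/eqP; rewrite -dist_class_eq0 -dxy dist_class_eq0.
Qed.

Lemma dist_class_lt k (c : T -> 'I_k) v i z :
  connect e v z -> c z = i -> dist_class e c v i < #|T|.
Proof.
move=> cvz czi; apply: leq_ltn_trans (connect_dist_lt cvz).
by apply: geq_bigminn_cond; rewrite czi.
Qed.

End Distance.

Lemma chiL_leq (T : finType) (e : rel T) k :
  k <= #|T| -> has_locating_coloring e k -> chiL e <= k.
Proof. by rewrite -ltnS; apply: find_iota_leq. Qed.

Lemma has_locating_coloring_card (T : finType) (e : rel T) :
  irreflexive e -> has_locating_coloring e #|T|.
Proof.
move=> irr; apply/existsP; exists [ffun x => enum_rank x]; apply/and3P; split.
- apply/forallP => x; apply/forallP => y; apply/implyP; rewrite !ffunE.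
  by apply: contraL => /eqP/enum_rank_inj ->; rewrite irr.
- by apply/forallP => i; apply/existsP; exists (enum_val i); rewrite ffunE enum_valK.
- by apply/injectiveP => x y /color_code_inj_color; rewrite !ffunE; apply: enum_rank_inj.
Qed.

Lemma chiL_leq_card (T : finType) (e : rel T) : irreflexive e -> chiL e <= #|T|.
Proof. by move=> irr; apply/chiL_leq/has_locating_coloring_card. Qed.

Lemma has_locating_coloring_chiL (T : finType) (e : rel T) :
  irreflexive e -> has_locating_coloring e (chiL e).
Proof. by move=> irr; apply: find_iota_ltP; rewrite ltnS chiL_leq_card. Qed.

Section Corona.
Variables (T : finType) (e : rel T) (m : nat).
Local Notation G := (corona e (edgeless m)).
Local Notation V := (T + T * 'I_m)%type.

Lemma corona_edgeless_irrefl : irreflexive e -> irreflexive G.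
Proof. by move=> irr [a|[a j]] /=; rewrite ?irr ?andbF. Qed.

Lemma card_corona_ge : #|T| <= #|{: V}|.
Proof. by rewrite card_sum leq_addr. Qed.

Lemma walk_corona_inl k a z : walk e k a z -> walk G k (inl a) (inl z).
Proof.
elim: k a => [|k IHk] a /=; first by move/eqP ->.
by case/existsP=> b /andP[eab wk]; apply/existsP; exists (inl b); rewrite /= eab IHk.
Qed.

(* A walk in the corona between base vertices can only leave the base to visit a
   leaf and come straight back, so dropping these detours gives a walk in e. *)
Lemma walk_corona_inlP k a z :
  walk G k (inl a) (inl z) -> exists2 k', k' <= k & walk e k' a z.
Proof.
elim/ltn_ind: k a => -[|k] IHk a /=.
  by move/eqP => [->]; exists 0 => //=.
case/existsP=> -[b|[b j]] /andP[/= eab wk].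
  have [k' lek' wk'] := IHk k (ltnSn k) b wk.
  by exists k'.+1 => //; apply/existsP; exists b; rewrite eab.
move/eqP: eab wk => <-{b}; case: k IHk => [|k] IHk //=.
case/existsP=> -[b|[b j']] /andP[/= eab wk]; last by rewrite andbF in eab.
move/eqP: eab wk => <-{b} wk.
have [k' lek' wk'] := IHk k (leqW (ltnSn k)) a wk.
by exists k' => //; rewrite (leq_trans lek') // leqW.
Qed.

Lemma dist_corona_inl a z : connect e a z -> dist G (inl a) (inl z) = dist e a z.
Proof.
move=> caz; have lt_daz := connect_dist_lt caz.
have leG : dist G (inl a) (inl z) <= dist e a z.
  apply: dist_leq_walk (walk_corona_inl (walk_dist lt_daz)).
  exact: leq_trans lt_daz card_corona_ge.
apply/eqP; rewrite eqn_leq leG /=.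
have [k' lek' wk'] := walk_corona_inlP (walk_dist (leq_ltn_trans leG
  (leq_trans lt_daz card_corona_ge))).
have lt_k' : k' < #|T| by apply: leq_ltn_trans lek' (leq_ltn_trans leG lt_daz).
exact: leq_trans (dist_leq_walk lt_k' wk') lek'.
Qed.

Lemma walk_corona_leaf k a j y : y != inr (a, j) ->
  walk G k.+1 (inr (a, j)) y = walk G k (inl a) y.
Proof.
move=> y_ne /=; apply/existsP/idP => [[[b|[b j']] /andP[/= eab wk]]|wk].
- by move/eqP: eab wk => ->.
- by rewrite andbF in eab.
- by exists (inl a); rewrite /= eqxx.
Qed.

(* The [minn] accounts for [dist] being capped at [#|V|] for unreachable vertices. *)
Lemma dist_corona_leaf a j y : y != inr (a, j) ->
  dist G (inr (a, j)) y = (minn (dist G (inl a) y) #|{: V}|.-1).+1.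
Proof.
move=> y_ne; rewrite -(@find_iota_minn _ _ #|{: V}|) ?leq_pred // /dist.
have -> : iota 0 #|{: V}| = 0 :: map succn (iota 0 #|{: V}|.-1).
  have : 0 < #|{: V}| by apply/card_gt0P; exists y.
  by case: #|{: V}| => // n _; rewrite /= (iotaDl 1 0).
rewrite /= eq_sym (negbTE y_ne) find_map.
by congr _.+1; apply: eq_find => k; rewrite /preim -(walk_corona_leaf _ y_ne).
Qed.

End Corona.

Section CoronaLowerBound.
Variables (T : finType) (e : rel T) (m k : nat) (c : T + T * 'I_m -> 'I_k).
Local Notation G := (corona e (edgeless m)).

Lemma color_code_corona_leaf a j j' :
  c (inr (a, j)) = c (inr (a, j')) ->
  color_code G c (inr (a, j)) = color_code G c (inr (a, j')).
Proof.
move=> cjj'; apply/ffunP => i; rewrite !ffunE.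
have [cji|cji] := eqVneq (c (inr (a, j))) i.
  have /eqP -> : dist_class G c (inr (a, j)) i == 0 by rewrite dist_class_eq0 cji.
  by have /eqP -> : dist_class G c (inr (a, j')) i == 0 by rewrite dist_class_eq0 -cjj' cji.
apply: eq_bigr => z /eqP czi.
have leaf_ne j1 : c (inr (a, j1)) = c (inr (a, j)) -> z != inr (a, j1).
  by move=> cj1; apply: contraNneq cji => zj1; rewrite -cj1 -zj1 czi.
by rewrite !dist_corona_leaf ?leaf_ne.
Qed.

Lemma locating_coloring_corona_edgeless_ge (a : T) :
  locating_coloring G c -> m.+1 <= k.
Proof.
case/and3P=> /forallP proper _ /injectiveP code_inj.
pose root_or_leaf (o : option 'I_m) := if o is Some j then c (inr (a, j)) else c (inl a).
suff /leq_card : injective root_or_leaf by rewrite card_option !card_ord.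
have root_leaf j : c (inl a) != c (inr (a, j)).
  by have /forallP/(_ (inr (a, j)))/implyP := proper (inl a); apply => /=.
case=> [j|] [j'|] //= cjj'.
- by have /code_inj [->] := color_code_corona_leaf cjj'.
- by move: (root_leaf j); rewrite cjj' eqxx.
- by move: (root_leaf j'); rewrite cjj' eqxx.
Qed.

End CoronaLowerBound.

Section CoronaUpperBound.
Variables (T : finType) (e : rel T) (m k : nat) (c : T -> 'I_k).
Hypothesis e_connected : connected_graph e.
Hypothesis c_locating : locating_coloring e c.
Local Notation G := (corona e (edgeless m)).
Local Notation V := (T + T * 'I_m)%type.

Definition corona_coloring : {ffun V -> 'I_(k + m)} :=
  [ffun x => match x with inl a => lshift m (c a) | inr (_, j) => rshift k j end].

Lemma dist_class_lt_card a i : dist_class e c a i < #|T|.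
Proof.
case/and3P: c_locating => _ /forallP/(_ i)/existsP[z /eqP cz] _.
exact: dist_class_lt (e_connected a z) cz.
Qed.

(* The bound on [d] keeps the result below the cap [#|V|] of the minimum defining
   [dist_class]. *)
Lemma dist_class_corona_lshift (x : V) (d : nat -> nat) a i :
  (forall z, dist G x (inl z) = d (dist e a z)) -> {homo d : p q / p <= q} ->
  d (dist_class e c a i) <= #|{: V}| ->
  dist_class G corona_coloring x (lshift m i) = d (dist_class e c a i).
Proof.
move=> dist_x d_homo; rewrite {1 2}/dist_class.
have := dist_class_lt_card a i; rewrite /dist_class.
have [->|[z1 /eqP cz1 dz1]] := bigminn_attained (fun z => c z == i) (dist e a) #|T|.
  by rewrite ltnn.
rewrite -dz1 => _ d_le; apply/eqP; rewrite eqn_leq; apply/andP; split.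
  by rewrite -dist_x; apply: geq_bigminn_cond; rewrite ffunE cz1.
apply: leq_bigminn => // -[z|[b j]]; rewrite ffunE ?eq_rlshift // eq_lshift.
by move=> czi; rewrite dist_x d_homo // dz1 geq_bigminn_cond.
Qed.

Lemma dist_class_corona_inl a i :
  dist_class G corona_coloring (inl a) (lshift m i) = dist_class e c a i.
Proof.
apply: (@dist_class_corona_lshift _ id) => // [z|].
  by rewrite dist_corona_inl.
exact/ltnW/(leq_trans (dist_class_lt_card a i))/card_corona_ge.
Qed.

Lemma dist_class_corona_leaf a j i :
  dist_class G corona_coloring (inr (a, j)) (lshift m i) = (dist_class e c a i).+1.
Proof.
apply: (@dist_class_corona_lshift _ succn) => // [z|].
  rewrite dist_corona_leaf // dist_corona_inl //; congr _.+1; apply/minn_idPl.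
  have lt_az := leq_trans (connect_dist_lt (e_connected a z)) (card_corona_ge T m).
  by rewrite -ltnS prednK // (leq_ltn_trans _ lt_az).
exact: leq_trans (dist_class_lt_card a i) (card_corona_ge T m).
Qed.

Lemma locating_coloring_corona (a0 : T) : locating_coloring G corona_coloring.
Proof.
case/and3P: c_locating => /forallP proper /forallP onto /injectiveP code_inj.
apply/and3P; split.
- apply/forallP => -[a|[a j]]; apply/forallP => -[b|[b j']]; apply/implyP => /= eab;
    rewrite !ffunE ?eq_lrshift ?eq_rlshift //; last by rewrite andbF in eab.
  by rewrite eq_lshift; have /forallP/(_ b)/implyP := proper a; apply.
- apply/forallP => i; apply/existsP; rewrite -[i]splitK; case: (split i) => [i'|j] /=.
    by have /existsP[z /eqP cz] := onto i'; exists (inl z); rewrite ffunE cz.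
  by exists (inr (a0, j)); rewrite ffunE.
- apply/injectiveP => x y code_xy; have := color_code_inj_color code_xy.
  move: code_xy; case: x => [a|[a j]]; case: y => [b|[b j']]; rewrite !ffunE //.
  + move=> /ffunP code_ab _; congr inl; apply: code_inj; apply/ffunP => i.
    by have := code_ab (lshift m i); rewrite !ffunE !dist_class_corona_inl.
  + by move=> _ /eqP; rewrite eq_lrshift.
  + by move=> _ /eqP; rewrite eq_rlshift.
  + move=> /ffunP code_ab /rshift_inj jj'; subst j'; congr (inr (_, _)).
    apply: code_inj; apply/ffunP => i.
    by have := code_ab (lshift m i); rewrite !ffunE !dist_class_corona_leaf => -[].
Qed.

End CoronaUpperBound.

Theorem theorem5 (m n : nat) (T : finType) (e : rel T) :
  1 <= m -> 2 <= n -> #|T| = n -> is_tree e ->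
  m.+1 <= chiL (corona e (edgeless m)) <= chiL e + m.
Proof.
move=> _ n_ge2 card_T [[_ irr] connected _].
have T_gt0 : 0 < #|T| by rewrite card_T (leq_trans _ n_ge2).
have [a0 _] := card_gt0P T_gt0.
have irrG := @corona_edgeless_irrefl _ _ m irr.
apply/andP; split.
  have /existsP[c c_loc] := has_locating_coloring_chiL irrG.
  exact: locating_coloring_corona_edgeless_ge a0 c_loc.
have /existsP[c c_loc] := has_locating_coloring_chiL irr.
apply: chiL_leq.
  by rewrite card_sum card_prod card_ord leq_add ?chiL_leq_card ?leq_pmull.
by apply/existsP; exists (corona_coloring m c); apply: locating_coloring_corona.
Qed.
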